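(* A general map $\mathcal M=(B,\sigma,\alpha)$ has a single component (i.e. is a map) if and only if $\mathcal M$ has a quasi-tree.
   Context: A general map is a triple $\mathcal M=(B,\sigma,\alpha)$ where $B$ is a finite set (of flags), $\sigma,\alpha$ are permutations of $B$, and $\alpha$ is a fixed-point-free involution. Its components are the orbits of the group $\langle\sigma,\alpha\rangle$ on $B$; it is a map if $\langle\sigma,\alpha\rangle$ acts transitively on $B$. The edges of $\mathcal M$ are the cycles of $\alpha$ (two-element sets); for $b\in B$ write $\underline b=\{b,\alpha(b)\}$. For a set $F$ of edges, let $\alpha_F$ be the permutation of $B$ equal to $\alpha$ on $\bigcup F$ and to the identity elsewhere; the tour of $F$ in $\mathcal M$ is the permutation $\tau=\sigma\alpha_F$, i.e. $\tau(b)=\sigma(\alpha(b))$ if $\underline b\in F$ and $\tau(b)=\sigma(b)$ otherwise. A quasi-tree of $\mathcal M$ is a set $F$ of edges whose tour in $\mathcal M$ is a single cycle (a cyclic permutation of all of $B$). *)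

From mathcomp Require Import all_boot all_fingroup.
Set Implicit Arguments. Unset Strict Implicit. Unset Printing Implicit Defensive.

(* A general map (B, sigma, alpha): B a finite type of flags, sigma alpha
   permutations of B, alpha a fixed-point-free involution. *)
Definition fpf_involution (B : finType) (alpha : {perm B}) : Prop :=
  (forall b, alpha (alpha b) = b) /\ (forall b, alpha b != b).

Definition edge_of (B : finType) (alpha : {perm B}) (b : B) : {set B} :=
  [set b; alpha b].

Definition edges (B : finType) (alpha : {perm B}) : {set {set B}} :=
  [set edge_of alpha b | b : B].

Definition components (B : finType) (sigma alpha : {perm B}) : {set {set B}} :=
  orbit 'P <<[set sigma; alpha]>> @: [set: B].

Definition is_map (B : finType) (sigma alpha : {perm B}) : Prop :=
  #|components sigma alpha| = 1.

Definition alphaF_fun (B : finType) (alpha : {perm B}) (F : {set {set B}}) (b : B) : B :=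
  if edge_of alpha b \in F then alpha b else b.

Definition tour_fun (B : finType) (sigma alpha : {perm B}) (F : {set {set B}}) (b : B) : B :=
  sigma (alphaF_fun alpha F b).

Definition single_cycle (B : finType) (f : B -> B) : Prop :=
  exists tau : {perm B}, (forall b, tau b = f b) /\ #|porbits tau| = 1.

Definition quasi_tree (B : finType) (sigma alpha : {perm B}) (F : {set {set B}}) : Prop :=
  F \subset edges alpha /\ single_cycle (tour_fun sigma alpha F).

From mathcomp Require Import all_boot all_fingroup.
Set Implicit Arguments. Unset Strict Implicit. Unset Printing Implicit Defensive.

(* Toggling the edge {b, alpha b} in F composes the tour with the transposition
   (b, alpha b), which merges the tour cycles of b and alpha b when they differ.
   So a set of edges whose tour has the fewest cycles has every edge inside a
   single cycle; then the cycles are stable under sigma and alpha, hence under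
   the group they generate, and for a map there is only one.  Conversely each
   step of a tour moves inside a component, so a one-cycle tour forces a single
   component. *)

Section PermGroupOrbits.
Variable T : finType.

Lemma orbit_gen_sub (S : {set {perm T}}) (A : {set T}) x :
  (forall s y, s \in S -> y \in A -> s y \in A) ->
  x \in A -> orbit 'P <<S>> x \subset A.
Proof.
move=> stabA Ax; rewrite acts_sub_orbit // gen_subG.
apply/subsetP=> s Ss; rewrite !inE; apply/subsetP=> y Ay.
by rewrite inE /= apermE stabA.
Qed.

Lemma card_orbits1P (H : {group {perm T}}) :
  reflect (exists x, [set: T] \subset orbit 'P H x)
          (#|orbit 'P H @: [set: T]| == 1).
Proof.
apply: (iffP cards1P) => [[o orbitsE] | [x Hx]].
  have /imsetP[x _ ox] : o \in orbit 'P H @: [set: T] by rewrite orbitsE set11.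
  exists x; apply/subsetP=> y _.
  have : orbit 'P H y \in [set o] by rewrite -orbitsE imset_f ?inE.
  by rewrite inE ox => /eqP <-; apply: orbit_refl.
exists (orbit 'P H x); apply/setP=> o; rewrite inE.
apply/imsetP/eqP=> [[y _ ->] | ->]; last by exists x.
by apply/orbit_eqP/(subsetP Hx); rewrite inE.
Qed.

Lemma porbitsE (t : {perm T}) : porbits t = orbit 'P <[t]> @: [set: T].
Proof.
by apply/setP=> o; apply/imsetP/imsetP=> [] [x _ ->]; exists x; rewrite ?porbitE.
Qed.

End PermGroupOrbits.

Section Tours.
Variables (B : finType) (sigma alpha : {perm B}).
Hypothesis alphaK : involutive alpha.
Implicit Types F : {set {set B}}.

Lemma edge_of_alpha b : edge_of alpha (alpha b) = edge_of alpha b.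
Proof. by rewrite /edge_of alphaK setUC. Qed.

Lemma alphaF_funK F : involutive (alphaF_fun alpha F).
Proof.
move=> x; rewrite /alphaF_fun; case eF: (edge_of alpha x \in F); rewrite ?eF //.
by rewrite edge_of_alpha eF alphaK.
Qed.

Definition alphaF F : {perm B} := perm (can_inj (alphaF_funK F)).

Lemma alphaFK F : involutive (alphaF F).
Proof. by move=> x; rewrite !permE alphaF_funK. Qed.

Definition tour F : {perm B} := (alphaF F * sigma)%g.

Lemma tourE F x : tour F x = tour_fun sigma alpha F x.
Proof. by rewrite permM permE. Qed.

Definition toggle F e := if e \in F then F :\ e else e |: F.

Lemma toggle_edge_sub F b :
  F \subset edges alpha -> toggle F (edge_of alpha b) \subset edges alpha.
Proof.
rewrite /toggle => sFE; case: ifP => _; first exact: subset_trans (subsetDl _ _) sFE.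
by rewrite subUset sFE sub1set imset_f.
Qed.

Lemma alphaF_toggle F b :
  alphaF (toggle F (edge_of alpha b)) = (tperm b (alpha b) * alphaF F)%g.
Proof.
set e := edge_of alpha b; apply/permP=> x; rewrite permM.
case: (tpermP b (alpha b) x) => [-> | -> | /eqP xNb /eqP xNab];
  rewrite !permE /alphaF_fun /toggle.
1,2: by rewrite edge_of_alpha -/e; case: (e \in F) => /=;
       rewrite ?in_setD1 ?in_setU1 ?eqxx ?alphaK.
have xe : edge_of alpha x != e.
  apply/eqP=> xeE; have : x \in e by rewrite -xeE !inE eqxx.
  by rewrite !inE (negbTE xNb) (negbTE xNab).
by case: (e \in F); rewrite ?in_setD1 ?in_setU1 (negbTE xe).
Qed.

Lemma tour_toggle F b :
  tour (toggle F (edge_of alpha b)) = (tperm b (alpha b) * tour F)%g.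
Proof. by rewrite /tour alphaF_toggle mulgA. Qed.

Lemma card_porbits_toggle F b :
  alpha b \notin porbit (tour F) b ->
  #|porbits (tour (toggle F (edge_of alpha b)))| < #|porbits (tour F)|.
Proof.
move=> abNb; have bNab : b != alpha b by apply: contraNneq abNb => <-; apply: porbit_id.
have := porbits_mul_tperm (tour F) b (alpha b).
rewrite porbit_sym abNb bNab /= addn2 addn1 tour_toggle => -[<-].
exact: ltnSn.
Qed.

Local Notation G := <<[set sigma; alpha]>>%g.

Lemma alphaF_in_orbit F x : alphaF F x \in orbit 'P G x.
Proof.
rewrite permE /alphaF_fun; case: ifP => _; last exact: orbit_refl.
by rewrite -[alpha x]apermE mem_orbit // mem_gen ?set22.
Qed.

Lemma tour_in_orbit F x : tour F x \in orbit 'P G x.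
Proof.
rewrite permM -[sigma _]apermE.
by apply: orbit_trans (alphaF_in_orbit F x); rewrite mem_orbit // mem_gen ?set21.
Qed.

Lemma porbit_tour_sub F x : porbit (tour F) x \subset orbit 'P G x.
Proof.
rewrite porbitE; apply: orbit_gen_sub (orbit_refl _ _ _) => _ y /set1P -> xy.
by apply: orbit_trans xy; apply: tour_in_orbit.
Qed.

Lemma orbit_sub_porbit_tour F x :
  (forall b, alpha b \in porbit (tour F) b) ->
  orbit 'P G x \subset porbit (tour F) x.
Proof.
set t := tour F => alpha_in.
have alpha_porbit z : porbit t (alpha z) = porbit t z by apply/eqP; rewrite eq_porbit_mem.
apply: orbit_gen_sub (porbit_id _ _) => s y.
rewrite -!eq_porbit_mem => /set2P[] -> /eqP <-; apply/eqP; last exact: alpha_porbit.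
have alphaF_porbit : porbit t (alphaF F y) = porbit t y.
  by rewrite permE /alphaF_fun; case: (_ \in F).
have -> : sigma y = (t ^+ 1)%g (alphaF F y) by rewrite expg1 permM alphaFK.
by rewrite porbit_perm.
Qed.

Lemma is_map_tour F : #|porbits (tour F)| = 1 -> is_map sigma alpha.
Proof.
rewrite porbitsE => /eqP/card_orbits1P[b sBb]; apply/eqP/card_orbits1P; exists b.
by apply: subset_trans sBb _; rewrite -porbitE porbit_tour_sub.
Qed.

Lemma is_map_one_cycle_tour :
  is_map sigma alpha ->
  exists2 F : {set {set B}}, F \subset edges alpha & #|porbits (tour F)| = 1.
Proof.
move=> /eqP/card_orbits1P[b sBb].
have [F sFE minF] := @arg_minnP _ set0 (fun F => F \subset edges alpha)
  (fun F => #|porbits (tour F)|) (sub0set _).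
exists F => //.
have alpha_in c : alpha c \in porbit (tour F) c.
  apply/negPn/negP => /card_porbits_toggle; rewrite ltnNge.
  by rewrite minF ?toggle_edge_sub.
rewrite porbitsE; apply/eqP/card_orbits1P; exists b; rewrite -porbitE.
by apply: subset_trans sBb (orbit_sub_porbit_tour _ alpha_in).
Qed.

End Tours.

Theorem lemma2 (B : finType) (sigma alpha : {perm B}) :
  fpf_involution alpha ->
  (is_map sigma alpha <-> exists F : {set {set B}}, quasi_tree sigma alpha F).
Proof.
case=> alphaK _; split => [mapM | [F [_ [tau [tauE card_tau]]]]].
  have [F sFE cardF] := is_map_one_cycle_tour alphaK mapM.
  by exists F; split => //; exists (tour sigma alphaK F); split=> // x; rewrite tourE.
have tau_tour : tau = tour sigma alphaK F by apply/permP=> x; rewrite tauE tourE.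
by rewrite tau_tour in card_tau; apply: is_map_tour card_tau.
Qed.
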